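(* Let $X$ be a Fréchet space and let $\Gamma:[0,1]\to ck(X)$ be Pettis integrable in $ck(X)$. Then every scalarly measurable selection of $\Gamma$ is Pettis integrable.
   Context: $X$ is a Fréchet space, $X^*$ its dual, $ck(X)$ the nonempty compact convex subsets, $\sigma(x^*,C)=\sup_{x\in C}\langle x^*,x\rangle$. Pettis integrable in $ck(X)$ (for a multifunction): $\sigma(x^*,\Gamma(\cdot))$ is Lebesgue integrable for each $x^*\in X^*$ and for each Lebesgue measurable $E\subseteq[0,1]$ there is $x_E\in ck(X)$ with $\sigma(x^*,x_E)=\int_E\sigma(x^*,\Gamma(t))dt$ for all $x^*$. A selection of $\Gamma$ is a function $f:[0,1]\to X$ with $f(t)\in\Gamma(t)$ for a.e. $t$; it is scalarly measurable if $t\mapsto\langle x^*,f(t)\rangle$ is measurable for each $x^*$; a function $f$ is Pettis integrable if $\langle x^*,f(\cdot)\rangle$ is Lebesgue integrable for each $x^*$ and for each measurable $E$ there is $x_E\in X$ with $\langle x^*,x_E\rangle=\int_E\langle x^*,f(t)\rangle dt$ for all $x^*$. *)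

From HB Require Import structures.
From mathcomp Require Import all_boot all_order all_algebra.
From mathcomp Require Import all_classical all_reals all_analysis.
Set Implicit Arguments. Unset Strict Implicit. Unset Printing Implicit Defensive.
Import Order.TTheory GRing.Theory Num.Theory.
Local Open Scope classical_set_scope.
Local Open Scope ring_scope.

(* The measurable type carrying the (completed) Lebesgue sigma-algebra on R:
   the domain of the completed Lebesgue measure.  Its elements are reals. *)
Notation lebT R :=
  (@caratheodory_type R _ ((@wlength R idfun)^*)%mu).

Notation leb R := (@completed_lebesgue_measure R).

Definition I01 {R : realType} : set (lebT R) := [set t : R | 0 <= t <= 1].

(* Frechet space: a (Hausdorff) locally convex tvs (library tvsType) that is
   metrizable (countable neighbourhood base at 0) and complete. *)
Definition frechet (R : realType) (X : tvsType R) : Prop :=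
  [/\ hausdorff_space X,
      (exists B : nat -> set X,
          (forall n, nbhs (0 : X) (B n)) /\
          (forall U, nbhs (0 : X) U -> exists n, B n `<=` U))
    & (forall F : set_system X, ProperFilter F -> cauchy F -> exists x : X, F --> x)].

Definition dual_elem (R : realType) (X : tvsType R) (xs : {linear X -> R^o}) : Prop :=
  continuous (xs : X -> R^o).

Definition ck (R : realType) (X : tvsType R) (C : set X) : Prop :=
  [/\ C !=set0, compact C & convex_set C].

Definition supp_fun (R : realType) (X : tvsType R) (xs : {linear X -> R^o})
  (C : set X) : R := sup [set (xs x : R) | x in C].

Definition pettis_ck (R : realType) (X : tvsType R) (G : lebT R -> set X) : Prop :=
  (forall t, I01 t -> ck (G t)) /\
  (forall xs : {linear X -> R^o}, dual_elem xs ->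
     (leb R).-integrable I01 (fun t => (supp_fun xs (G t))%:E)) /\
  (forall E : set (lebT R), measurable E -> E `<=` I01 ->
     exists2 xE : set X, ck xE &
       forall xs : {linear X -> R^o}, dual_elem xs ->
         (supp_fun xs xE)%:E = (\int[leb R]_(t in E) (supp_fun xs (G t))%:E)%E).

Definition selection (R : realType) (X : tvsType R) (G : lebT R -> set X)
  (f : lebT R -> X) : Prop :=
  {ae leb R, forall t, I01 t -> G t (f t)}.

Definition scalarly_measurable (R : realType) (X : tvsType R) (f : lebT R -> X) : Prop :=
  forall xs : {linear X -> R^o}, dual_elem xs ->
    measurable_fun I01 (fun t => (xs (f t) : R)).

Definition pettis (R : realType) (X : tvsType R) (f : lebT R -> X) : Prop :=
  (forall xs : {linear X -> R^o}, dual_elem xs ->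
     (leb R).-integrable I01 (fun t => (xs (f t) : R)%:E)) /\
  (forall E : set (lebT R), measurable E -> E `<=` I01 ->
     exists xE : X,
       forall xs : {linear X -> R^o}, dual_elem xs ->
         (xs xE : R)%:E = (\int[leb R]_(t in E) (xs (f t) : R)%:E)%E).

(** A scalarly measurable selection [f] of [Gamma] satisfies
    [|x'(f t)| <= |sigma(x', Gamma t)| + |sigma(-x', Gamma t)|] almost everywhere,
    so [x' o f] is integrable.  For a measurable [E], the functional
    [phi(x') = \int_E x'(f t) dt] on the dual is linear and dominated by
    [\int_E sigma(x', Gamma t) dt = sigma(x', x_E)].  A linear functional on the
    dual dominated by the support function of a compact convex set [K] is the
    evaluation at a point of [K]: given finitely many [x'_i], a minimiser [x0]
    over [K] of [\sum_i (phi(x'_i) - x'_i(x))^2] satisfies the first-order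
    condition along segments of [K], so testing the domination against
    [\sum_i (phi(x'_i) - x'_i(x0)) x'_i] forces [x'_i(x0) = phi(x'_i)]; the
    finite intersection property of [K] handles the whole dual at once. *)

From HB Require Import structures.
From mathcomp Require Import all_boot all_order all_algebra.
From mathcomp Require Import all_classical all_reals all_analysis.
From mathcomp Require Import ring lra measurable_realfun.
Set Implicit Arguments. Unset Strict Implicit. Unset Printing Implicit Defensive.
Import Order.TTheory GRing.Theory Num.Theory.
Local Open Scope classical_set_scope.
Local Open Scope ring_scope.

Section DualCombination.
Variables (R : realType) (X : tvsType R).
Local Notation L := {linear X -> R^o}.

Definition dual_comb (s : seq (R * L)) (x : X) : R^o := \sum_(p <- s) p.1 * p.2 x.

Lemma dual_comb_linear s : linear (dual_comb s).
Proof.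
move=> a x y; rewrite /dual_comb scaler_sumr -big_split /=.
by apply: eq_bigr => p _; rewrite linearP mulrDr mulrCA.
Qed.

HB.instance Definition _ s :=
  GRing.isLinear.Build R X R^o *:%R (dual_comb s) (dual_comb_linear s).

Lemma dual_elem_comb s : (forall p, p \in s -> dual_elem p.2) -> dual_elem (dual_comb s).
Proof.
rewrite /dual_elem /dual_comb; elim: s => [_|p s IH ds].
  by under [X in continuous X]eq_fun do rewrite big_nil; move=> x; exact: cvg_cst.
under [X in continuous X]eq_fun do rewrite big_cons.
move=> x; apply: cvgD; first by apply: cvgMl_tmp; exact: (ds p (mem_head _ _) x).
by apply: IH => q qs; apply: ds; rewrite in_cons qs orbT.
Qed.

Lemma dual_comb_opp (xs : L) x : (dual_comb [:: (-1, xs)] : L) x = - xs x.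
Proof. by rewrite /= /dual_comb big_cons big_nil addr0 mulN1r. Qed.

Definition dual_linear (phi : L -> R) : Prop :=
  forall s : seq (R * L), (forall p, p \in s -> dual_elem p.2) ->
    phi (dual_comb s) = \sum_(p <- s) p.1 * phi p.2.

End DualCombination.

Section SupportFunction.
Variables (R : realType) (X : tvsType R).
Local Notation L := {linear X -> R^o}.

Lemma supp_fun_ub (K : set X) (xs : L) x :
  compact K -> dual_elem xs -> K x -> xs x <= supp_fun xs K.
Proof.
move=> cK dxs Kx; apply: sup_upper_bound; last by exists x.
apply: compact_has_sup; first by exists (xs x), x.
exact/continuous_compact/cK/continuous_subspaceT.
Qed.

Lemma supp_fun_le (K : set X) (xs : L) c :
  K !=set0 -> (forall x, K x -> xs x <= c) -> supp_fun xs K <= c.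
Proof.
move=> [x Kx] le_c; apply: ge_sup; first by exists (xs x), x.
by move=> _ [y Ky <-]; exact: le_c.
Qed.

Lemma abs_le_supp_fun (K : set X) (xs : L) x :
  compact K -> dual_elem xs -> K x ->
  `|xs x| <= `|supp_fun xs K| + `|supp_fun (dual_comb [:: (-1, xs)]) K|.
Proof.
move=> cK dxs Kx.
have dnxs : dual_elem (dual_comb [:: (-1, xs)]).
  by apply: dual_elem_comb => p; rewrite mem_seq1 => /eqP ->.
have le_xs := supp_fun_ub cK dxs Kx.
have := supp_fun_ub cK dnxs Kx; rewrite dual_comb_opp => le_nxs.
rewrite ler_norml; apply/andP; split.
  by rewrite lerNl (le_trans le_nxs) // (le_trans (ler_norm _)) // lerDr.
by rewrite (le_trans le_xs) // (le_trans (ler_norm _)) // lerDl.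
Qed.

End SupportFunction.

Lemma first_order_le0 (R : realFieldType) (A B : R) :
  0 <= B -> (forall l, 0 <= l -> l <= 1 -> 2 * l * A <= l ^+ 2 * B) -> A <= 0.
Proof.
move=> B0 quad; rewrite leNgt; apply/negP => A0.
have AB0 : 0 < A + B by rewrite ltr_wpDr.
pose l := A / (A + B).
have l0 : 0 < l by rewrite divr_gt0.
have lAB : l * (A + B) = A by rewrite /l divfK // gt_eqF.
have l1 : l <= 1 by rewrite /l ler_pdivrMr // mul1r lerDl.
have := quad l (ltW l0) l1; nra.
Qed.

Section EvaluationPoint.
Variables (R : realType) (X : tvsType R).
Local Notation L := {linear X -> R^o}.
Variables (K : set X) (phi : L -> R).
Hypotheses (ckK : ck K) (phi_linear : dual_linear phi).
Hypothesis phi_le_supp : forall xs, dual_elem xs -> phi xs <= supp_fun xs K.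

Definition sqr_dev (s : seq L) (x : X) : R^o := \sum_(xs <- s) (phi xs - xs x) ^+ 2.

Lemma continuous_sqr_dev s : (forall xs, xs \in s -> dual_elem xs) ->
  continuous (sqr_dev s).
Proof.
rewrite /sqr_dev; elim: s => [_|p s IH ds].
  by under [X in continuous X]eq_fun do rewrite big_nil; move=> x; exact: cvg_cst.
under [X in continuous X]eq_fun do rewrite big_cons.
move=> x; apply: cvgD; last by apply: IH => q qs; apply: ds; rewrite in_cons qs orbT.
under [X in X @ _]eq_fun do rewrite expr2.
by apply: cvgM; (apply: cvgB; [exact: cvg_cst | exact: (ds p (mem_head _ _) x)]).
Qed.

Lemma sqr_dev_min_first_order s x0 x :
  K x0 -> (forall y, K y -> sqr_dev s x0 <= sqr_dev s y) -> K x ->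
  \sum_(xs <- s) (phi xs - xs x0) * (xs x - xs x0) <= 0.
Proof.
move=> Kx0 x0_min Kx; have [_ _ cvK] := ckK.
apply: (@first_order_le0 _ _ (\sum_(xs <- s) (xs x - xs x0) ^+ 2)).
  by apply: sumr_ge0 => xs _; exact: sqr_ge0.
move=> l l0 l1; pose z := l *: x + (1 - l) *: x0.
have Kz : K z by apply/set_mem/(cvK x x0 (Itv01 l0 l1)); exact/mem_set.
rewrite -subr_ge0 mulr_sumr mulr_sumr -sumrB.
have := x0_min z Kz; rewrite -subr_ge0 /sqr_dev -sumrB.
congr (_ <= _); apply: eq_bigr => xs _.
rewrite /z linearD !linearZ /= /GRing.scale /=; ring.
Qed.

Lemma evaluation_point_fin (s : seq L) : (forall xs, xs \in s -> dual_elem xs) ->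
  exists2 x, K x & forall xs, xs \in s -> xs x = phi xs.
Proof.
move=> ds; have [K0 cK _] := ckK.
have [x0 /set_mem Kx0 x0_min] :=
  compact_EVT_min K0 cK (continuous_subspaceT (continuous_sqr_dev ds)).
pose a xs := phi xs - xs x0.
pose t := [seq (a xs, xs) | xs <- s].
have dt p : p \in t -> dual_elem p.2 by move=> /mapP [xs xss ->]; exact: ds.
have tE x : (dual_comb t : L) x = \sum_(xs <- s) a xs * xs x.
  by rewrite /= /dual_comb big_map.
have supp_t : supp_fun (dual_comb t) K <= (dual_comb t : L) x0.
  apply: supp_fun_le => // x Kx; rewrite !tE -subr_le0 -sumrB.
  under eq_bigr do rewrite -mulrBr.
  by apply: sqr_dev_min_first_order => // y Ky; apply: x0_min; exact: mem_set.
have sum_le0 : \sum_(xs <- s) a xs ^+ 2 <= 0.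
  have := le_trans (phi_le_supp (dual_elem_comb dt)) supp_t.
  rewrite (phi_linear dt) big_map tE -subr_le0 -sumrB /=.
  by under eq_bigr do rewrite -mulrBr -expr2.
have /eqP : \sum_(xs <- s) a xs ^+ 2 = 0.
  by apply/eqP; rewrite eq_le sum_le0 sumr_ge0 // => xs _; exact: sqr_ge0.
rewrite psumr_eq0; last by move=> xs _; exact: sqr_ge0.
move/allP => a0; exists x0 => // xs xss.
by have := a0 xs xss; rewrite sqrf_eq0 subr_eq0 => /eqP.
Qed.

Lemma evaluation_point : exists2 x, K x & forall xs, dual_elem xs -> xs x = phi xs.
Proof.
have [_ cK _] := ckK.
pose hits (xs : L) := K `&` [set x | xs x = phi xs].
have closed_level (xs : L) : dual_elem xs -> closed [set x : X | xs x = phi xs].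
  move=> dxs; have -> : [set x | xs x = phi xs] =
      (xs : X -> R^o) @^-1` [set y | y = phi xs] by [].
  by apply: preimage_closed; [move=> x _; exact: dxs | exact: closed_eq].
have finI_hits : finI (@dual_elem R X) hits.
  move=> D sD; have [x Kx xE] := evaluation_point_fin (s := finmap.enum_fset D)
    (fun xs xsD => set_mem (sD xs xsD)).
  by exists x => xs /= xsD; split => //; exact: xE.
have d0 : dual_elem (dual_comb [::] : L) by apply: dual_elem_comb => p; rewrite in_nil.
have [|x [Kx x_cl]] := cK _ (finI_filter finI_hits).
  by exists (hits (dual_comb [::])); [exact: finI_from1 | move=> ? []].
exists x => // xs dxs; apply: (closed_level xs dxs) => B Bx.
by apply: x_cl => //; exists (hits xs); [exact: finI_from1 | move=> ? []].
Qed.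

End EvaluationPoint.

Lemma measurable_I01 (R : realType) : measurable (I01 : set (lebT R)).
Proof.
have -> : I01 = `[0%R, 1%R]%classic :> set R.
  by apply/seteqP; split => x /=; rewrite in_itv.
apply: (@sub_caratheodory _ _ R (@wlength R idfun)); exact: measurable_itv.
Qed.

Section Selection.
Variables (R : realType) (X : tvsType R) (G : lebT R -> set X) (f : lebT R -> X).
Local Notation L := {linear X -> R^o}.
Hypothesis G_ck : forall t, I01 t -> ck (G t).
Hypothesis supp_integrable : forall xs : L, dual_elem xs ->
  (leb R).-integrable I01 (fun t => (supp_fun xs (G t))%:E).
Variable N : set (lebT R).
Hypotheses (mN : measurable N) (N0 : leb R N = 0%E).
Hypothesis f_sel : forall t, ~ N t -> I01 t -> G t (f t).
Hypothesis f_meas : forall xs : L, dual_elem xs ->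
  measurable_fun I01 (fun t => (xs (f t) : R)).

Lemma selection_le_supp (xs : L) t :
  dual_elem xs -> ~ N t -> I01 t -> xs (f t) <= supp_fun xs (G t).
Proof.
move=> dxs Nt It; have [_ cG _] := G_ck It.
exact: supp_fun_ub cG dxs (f_sel Nt It).
Qed.

Lemma integrable_selection (xs : L) : dual_elem xs ->
  (leb R).-integrable I01 (fun t => (xs (f t) : R)%:E).
Proof.
move=> dxs; pose nxs : L := dual_comb [:: (-1, xs)].
have dnxs : dual_elem nxs by apply: dual_elem_comb => p; rewrite mem_seq1 => /eqP ->.
have mI := @measurable_I01 R.
have mD : measurable (I01 `\` N) by exact: measurableD.
have mf : measurable_fun I01 (fun t => (xs (f t) : R)%:E).
  exact/measurable_EFinP/f_meas.
pose bound t := (`|supp_fun xs (G t)| + `|supp_fun nxs (G t)|)%:E.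
have bound_int : (leb R).-integrable (I01 `\` N) bound.
  have int_abs ys : dual_elem ys ->
      (leb R).-integrable (I01 `\` N) (abse \o (fun t => (supp_fun ys (G t))%:E)).
    move=> dys; apply: integrable_abse.
    exact: integrableS mI mD (@subDsetl _ _ _) (supp_integrable dys).
  apply: (eq_integrable mD _ _ _ (integrableD mD (int_abs _ dxs) (int_abs _ dnxs))).
  by move=> t _; rewrite /bound /= EFinD.
have intD : (leb R).-integrable (I01 `\` N) (fun t => (xs (f t) : R)%:E).
  apply: (le_integrable mD (measurable_funS mI (@subDsetl _ _ _) mf) _ bound_int).
  move=> t [It Nt]; have [_ cG _] := G_ck It.
  rewrite !abse_EFin lee_fin [leRHS]ger0_norm ?addr_ge0 //.
  exact: abs_le_supp_fun cG dxs (f_sel Nt It).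
apply/integrableP; split => //.
rewrite (ge0_negligible_integral mN mI) //; last exact: measurableT_comp.
by case/integrableP: intD.
Qed.

Section OnSubset.
Variable E : set (lebT R).
Hypotheses (mE : measurable E) (EI : E `<=` I01).

Lemma integrable_selection_on (xs : L) : dual_elem xs ->
  (leb R).-integrable E (fun t => (xs (f t) : R)%:E).
Proof. by move=> dxs; exact: integrableS (@measurable_I01 R) mE EI (integrable_selection dxs). Qed.

Definition selection_integral (xs : L) : R :=
  fine (\int[leb R]_(t in E) (xs (f t) : R)%:E)%E.

Lemma selection_integralE (xs : L) : dual_elem xs ->
  (\int[leb R]_(t in E) (xs (f t) : R)%:E)%E = (selection_integral xs)%:E.
Proof.
by move=> dxs; rewrite fineK //; exact: (integrable_fin_num mE (integrable_selection_on dxs)).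
Qed.

Lemma dual_linear_selection_integral : dual_linear selection_integral.
Proof.
elim=> [_|p s IH ds].
  rewrite big_nil /selection_integral.
  by under eq_integral do rewrite /= /dual_comb big_nil; rewrite integral0.
have dp : dual_elem p.2 by apply: ds; exact: mem_head.
have dsE q : q \in s -> dual_elem q.2 by move=> qs; apply: ds; rewrite in_cons qs orbT.
apply: EFin_inj; rewrite big_cons -(IH dsE) EFinD EFinM.
rewrite -(selection_integralE (dual_elem_comb ds)) -(selection_integralE dp).
rewrite -(selection_integralE (dual_elem_comb dsE)).
rewrite -integralZl //; last exact: integrable_selection_on.
rewrite -integralD //; last exact: integrable_selection_on (dual_elem_comb dsE).
  by apply: eq_integral => t _; rewrite /= /dual_comb big_cons EFinD EFinM.
exact/integrableZl/integrable_selection_on.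
Qed.

Lemma selection_integral_le (xs : L) : dual_elem xs ->
  ((selection_integral xs)%:E <= \int[leb R]_(t in E) (supp_fun xs (G t))%:E)%E.
Proof.
move=> dxs; rewrite -selection_integralE //.
have iS := integrableS (@measurable_I01 R) mE EI (supp_integrable dxs).
have mD : measurable (E `\` N) by exact: measurableD.
rewrite (negligible_integral mN mE (integrable_selection_on dxs)) //.
rewrite (negligible_integral mN mE iS) //.
apply: le_integral => //.
- exact: integrableS mE mD (@subDsetl _ _ _) (integrable_selection_on dxs).
- exact: integrableS mE mD (@subDsetl _ _ _) iS.
- by move=> t /set_mem [Et Nt]; rewrite lee_fin selection_le_supp //; exact: EI.
Qed.

End OnSubset.

Lemma pettis_selection :
  (forall E : set (lebT R), measurable E -> E `<=` I01 ->
     exists2 xE : set X, ck xE & forall xs : L, dual_elem xs ->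
       (supp_fun xs xE)%:E = (\int[leb R]_(t in E) (supp_fun xs (G t))%:E)%E) ->
  pettis f.
Proof.
move=> G_pettis; split=> [xs dxs|E mE EI]; first exact: integrable_selection.
have [xE ckE xE_int] := G_pettis E mE EI.
have le_supp xs : dual_elem xs -> selection_integral E xs <= supp_fun xs xE.
  by move=> dxs; rewrite -lee_fin xE_int //; exact: selection_integral_le.
have [x _ xE_eval] :=
  evaluation_point ckE (dual_linear_selection_integral mE EI) le_supp.
by exists x => xs dxs; rewrite xE_eval // selection_integralE.
Qed.

End Selection.

Unset Implicit Arguments.
Theorem corollary4p8 (R : realType) (X : tvsType R) (G : lebT R -> set X) :
  frechet X -> pettis_ck G ->
  forall f : lebT R -> X, selection G f -> scalarly_measurable f -> pettis f.
Proof.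
move=> _ [G_ck [supp_int G_pettis]] f [N [mN N0 N_sel]] f_meas.
apply: (pettis_selection G_ck supp_int mN N0 _ f_meas G_pettis) => t Nt It.
by apply: contrapT => nG; apply: Nt; apply: N_sel => /= /(_ It).
Qed.
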